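(* Let $p,q$ be coprime positive integers with $\frac pq<\frac12$. Then $P_{0,\frac pq}\triangleleft P_{1,\frac pq}$, i.e. $H_2(M_0)>H_2(M_1)$ and $H_2(m_0)>H_2(m_1)$, where $M_r,m_r$ denote the points of absolute maximum and absolute minimum of $P_{r,\frac pq}$.
   Context: $H_2:[0,1]\to[0,1]$ is $H_2(x)=3x$ on $I_0=[0,\frac13]$, $2-3x$ on $I_1=[\frac13,\frac23]$, $3x-2$ on $I_2=[\frac23,1]$. For coprime $p,q$ with $0<\frac pq<\frac12$ and $r\in\{0,1,\dots,q-2p\}$, $\Gamma_{r,\frac pq}$ is the bimodal over-twist pattern whose cyclic permutation $\Pi_{r,\frac pq}$ of $\{1,\dots,q\}$ (action on the points of the cycle labelled $x_1<\dots<x_q$) is: $j\mapsto j+p$ for $1\le j\le r$; $j\mapsto q-j+r+1$ for $r+1\le j\le r+p$; $j\mapsto 2p-j+r+1$ for $r+p+1\le j\le r+2p$; $j\mapsto j-p$ for $r+2p+1\le j\le q$. $P_{r,\frac pq}$ denotes the cycle of $H_2$ exhibiting $\Gamma_{r,\frac pq}$ singled out by the location of its extremal points as follows (the paper asserts it is unique): for $r=0$ and $r=q-2p$ its points $M_r,m_r$ lie in $I_1$, and for $1\le r\le q-2p-1$, $M_r\in I_1$ and $m_r\in I_2$. Here the point of absolute maximum $M_r$ (resp. absolute minimum $m_r$) of a cycle $P$ is the point of $P$ whose image under $H_2$ is the largest (resp. smallest) point of $P$. $P_{r_2,\frac pq}\triangleleft P_{r_1,\frac pq}$ means $H_2(M_{r_2})>H_2(M_{r_1})$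 and $H_2(m_{r_2})>H_2(m_{r_1})$. *)

From Stdlib Require Import Reals Lra Lia Arith.
Open Scope R_scope.

Definition H2 (x : R) : R :=
  if Rle_dec x (1/3) then 3 * x
  else if Rle_dec x (2/3) then 2 - 3 * x
  else 3 * x - 2.

Definition in_I0 (x : R) : Prop := 0 <= x <= 1/3.
Definition in_I1 (x : R) : Prop := 1/3 <= x <= 2/3.
Definition in_I2 (x : R) : Prop := 2/3 <= x <= 1.

(** The cyclic permutation Pi_{r,p/q} of {1,...,q} (values outside the
    range 1..q are irrelevant). *)
Definition Pi (r p q j : nat) : nat :=
  if (j <=? r)%nat then (j + p)%nat
  else if (j <=? r + p)%nat then (q + r + 1 - j)%nat
  else if (j <=? r + 2 * p)%nat then (2 * p + r + 1 - j)%nat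
  else (j - p)%nat.

(** x_1 < ... < x_q (given as x : nat -> R on indices 1..q) are the points
    of a cycle of H_2 in [0,1] exhibiting the pattern Pi_{r,p/q}:
    H_2(x_j) = x_{Pi(j)}. *)
Definition exhibits (r p q : nat) (x : nat -> R) : Prop :=
  (forall j, (1 <= j <= q)%nat -> 0 <= x j <= 1) /\
  (forall j, (1 <= j < q)%nat -> x j < x (S j)) /\
  (forall j, (1 <= j <= q)%nat -> H2 (x j) = x (Pi r p q j)).

(** j is the index of the point of absolute maximum (its image is the
    largest point x_q), resp. absolute minimum (its image is x_1). *)
Definition is_max_index (r p q j : nat) : Prop :=
  (1 <= j <= q)%nat /\ Pi r p q j = q.
Definition is_min_index (r p q j : nat) : Prop :=
  (1 <= j <= q)%nat /\ Pi r p q j = 1%nat.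

Definition is_P (r p q : nat) (x : nat -> R) : Prop :=
  exhibits r p q x /\
  (forall j, is_max_index r p q j -> in_I1 (x j)) /\
  (forall j, is_min_index r p q j ->
     if (orb (r =? 0) (r =? q - 2 * p))%nat then in_I1 (x j) else in_I2 (x j)).

From Stdlib Require Import Reals Lra Lia Arith Relations.

(** Write x_1 < ... < x_q for the points of P_0 and y_1 < ... < y_q for those
    of P_1; as H_2 maps the extremal points onto the largest and smallest points
    of the cycle, the claim is y_q < x_q and y_1 < x_1.
    The pattern tells on which branch of H_2 each point lies, and then each
    gap y_k - x_k or x_k - y_(k+1) is either nonpositive for explicit reasons or
    at most a third of another gap.  The gaps are bounded, so this expansion
    forces all of them to be nonpositive: the two cycles interlace as
    y_1 <= x_1 <= y_2 <= ... <= y_q <= x_q.  Moreover y_1 < 1/3 <= x_1.  Finally,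
    if x_q = y_q, the H_2-orbit of x_q, which is all of P_0 because Pi_0 is
    cyclic when gcd(p, q) = 1, would lie inside P_1, forcing x_1 <= y_1. *)

Open Scope R_scope.

Ltac solve_Pi :=
  unfold Pi; repeat match goal with
  | |- context [Nat.leb ?a ?b] => destruct (Nat.leb_spec a b)
  end; lia.

Lemma Pi_range r p q j : (0 < p)%nat -> (r + 2 * p <= q)%nat -> (1 <= j <= q)%nat ->
  (1 <= Pi r p q j <= q)%nat.
Proof. intros; solve_Pi. Qed.

Definition reaches (f : nat -> nat) : relation nat :=
  clos_refl_trans nat (fun a b => f a = b).

Lemma reaches_step (f : nat -> nat) a b : f a = b -> reaches f a b.
Proof. intros h; now apply rt_step. Qed.

Lemma reaches_invariant (f : nat -> nat) (P : nat -> Prop) a b :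
  (forall c, P c -> P (f c)) -> reaches f a b -> P a -> P b.
Proof. intros hf hab; induction hab as [? ? <- | | ]; auto. Qed.

Section Pi0Cyclic.
Local Open Scope nat_scope.
Variables p q : nat.
Hypotheses (hp : 0 < p) (hpq : 2 * p < q).

Lemma Pi0_descend i k : p + 1 <= k -> k + i * p <= q -> reaches (Pi 0 p q) (k + i * p) k.
Proof.
  intros hk; induction i as [|i IH]; intros hi.
  - rewrite Nat.mul_0_l, Nat.add_0_r. apply rt_refl.
  - apply rt_trans with (k + i * p); [apply reaches_step; solve_Pi | apply IH; lia].
Qed.

(* From the top block [q - p + 1, q], Pi_0 descends by steps of p and comes back
   to the block shifted by q modulo p. *)
Lemma Pi0_top_rotate u : u < p ->
  reaches (Pi 0 p q) (q - p + 1 + u) (q - p + 1 + (u + q) mod p).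
Proof.
  intros hu.
  set (w := (u + q) mod p).
  assert (hw : w < p) by (apply Nat.mod_upper_bound; lia).
  assert (hdiv : q - 2 * p + u = (q - 2 * p + u) / p * p + w).
  { unfold w. replace (u + q) with (q - 2 * p + u + 2 * p) by lia.
    rewrite Nat.Div0.mod_add.
    pose proof (Nat.div_mod_eq (q - 2 * p + u) p). lia. }
  apply rt_trans with (p + 1 + w).
  { replace (q - p + 1 + u) with (p + 1 + w + (q - 2 * p + u) / p * p) by lia.
    apply Pi0_descend; lia. }
  apply rt_trans with (p - w); apply reaches_step; solve_Pi.
Qed.

Lemma Pi0_top_orbit n : reaches (Pi 0 p q) q (q - p + 1 + (p - 1 + n * q) mod p).
Proof.
  induction n as [|n IH].
  - rewrite Nat.mul_0_l, Nat.add_0_r, Nat.mod_small by lia.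
    replace (q - p + 1 + (p - 1)) with q by lia. apply rt_refl.
  - apply rt_trans with (1 := IH).
    replace ((p - 1 + S n * q) mod p) with (((p - 1 + n * q) mod p + q) mod p).
    + apply Pi0_top_rotate, Nat.mod_upper_bound; lia.
    + rewrite Nat.Div0.add_mod_idemp_l. f_equal. lia.
Qed.

Lemma Pi0_reaches_top t : Nat.gcd p q = 1 -> q - p + 1 <= t <= q -> reaches (Pi 0 p q) q t.
Proof.
  intros hcop ht.
  destruct (Nat.gcd_bezout_pos q p) as (a & b & hab); [lia|].
  rewrite Nat.gcd_comm, hcop in hab.
  set (u := t - (q - p + 1)).
  replace t with (q - p + 1 + (p - 1 + a * (u + 1) * q) mod p).
  { apply Pi0_top_orbit. }
  replace (p - 1 + a * (u + 1) * q) with (u + (1 + b * (u + 1)) * p).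
  - rewrite Nat.Div0.mod_add, Nat.mod_small; unfold u; lia.
  - replace (a * (u + 1) * q) with ((u + 1) * (a * q)) by ring.
    rewrite hab. lia.
Qed.

Lemma Pi0_cyclic k : Nat.gcd p q = 1 -> 1 <= k <= q -> reaches (Pi 0 p q) q k.
Proof.
  intros hcop.
  assert (hupper : forall t, p + 1 <= t <= q -> reaches (Pi 0 p q) q t).
  { intros t ht.
    pose proof (Nat.div_mod_eq (q - t) p).
    pose proof (Nat.mod_upper_bound (q - t) p ltac:(lia)).
    apply rt_trans with (t + (q - t) / p * p).
    - apply Pi0_reaches_top; lia.
    - apply Pi0_descend; lia. }
  intros hk. destruct (Nat.le_gt_cases (p + 1) k).
  - apply hupper; lia.
  - apply rt_trans with (2 * p + 1 - k); [apply hupper; lia | apply reaches_step; solve_Pi].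
Qed.
End Pi0Cyclic.

Lemma H2_mid t : 1/3 <= t <= 2/3 -> H2 t = 2 - 3 * t.
Proof. intros; unfold H2; destruct Rle_dec; [|destruct Rle_dec]; lra. Qed.

Lemma H2_high t : 2/3 <= t -> H2 t = 3 * t - 2.
Proof. intros; unfold H2; destruct Rle_dec; [|destruct Rle_dec]; lra. Qed.

Section Increasing.
Variables (x : nat -> R) (q : nat).
Hypothesis hx : forall j, (1 <= j < q)%nat -> x j < x (S j).

Lemma incr_lt a b : (1 <= a)%nat -> (a < b <= q)%nat -> x a < x b.
Proof.
  intros ha [hab hb]; induction hab as [|b hab IH].
  - apply hx; lia.
  - apply Rlt_trans with (x b); [apply IH; lia | apply hx; lia].
Qed.

Lemma incr_le a b : (1 <= a)%nat -> (a <= b <= q)%nat -> x a <= x b.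
Proof.
  intros ha hab. destruct (Nat.eq_dec a b) as [<-|]; [lra|].
  left; apply incr_lt; lia.
Qed.
End Increasing.

Lemma incr_le_of_among (x y : nat -> R) (q : nat) :
  (forall j, (1 <= j < q)%nat -> x j < x (S j)) ->
  (forall j, (1 <= j < q)%nat -> y j < y (S j)) ->
  (forall k, (1 <= k <= q)%nat -> exists m, (1 <= m <= q)%nat /\ x k = y m) ->
  forall k, (1 <= k <= q)%nat -> x k <= y k.
Proof.
  intros hx hy hxy.
  assert (hdesc : forall i, (i < q)%nat -> x (q - i)%nat <= y (q - i)%nat).
  { induction i as [|i IH]; intros hi.
    - rewrite Nat.sub_0_r. destruct (hxy q) as (m & hm & ->); [lia|].
      apply (incr_le y q hy); lia.
    - destruct (hxy (q - S i)%nat) as (m & hm & hxm); [lia|].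
      destruct (Nat.le_gt_cases m (q - S i)).
      + rewrite hxm. apply (incr_le y q hy); lia.
      + assert (x (q - S i)%nat < x (q - i)%nat).
        { replace (q - i)%nat with (S (q - S i)) by lia. apply hx; lia. }
        assert (y (q - i)%nat <= y m) by (apply (incr_le y q hy); lia).
        specialize (IH ltac:(lia)). lra. }
  intros k hk. replace k with (q - (q - k))%nat by lia. apply hdesc; lia.
Qed.

Lemma expanding_nonpos {I : Type} (P : I -> Prop) (v : I -> R) (c B : R) :
  1 < c -> (forall i, P i -> v i <= B) ->
  (forall i, P i -> 0 < v i -> exists j, P j /\ c * v i <= v j) ->
  forall i, P i -> v i <= 0.
Proof.
  intros hc hB hstep i hi. apply Rnot_lt_le. intros hpos.
  assert (hiter : forall n, exists j, P j /\ c ^ n * v i <= v j).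
  { induction n as [|n (j & hj & hle)].
    - exists i. split; [exact hi | simpl; lra].
    - assert (hcn : 0 < c ^ n) by (apply pow_lt; lra).
      destruct (hstep j hj) as (j' & hj' & hle'); [nra|].
      exists j'. split; [exact hj'|]. simpl. nra. }
  destruct (Pow_x_infinity c ltac:(rewrite Rabs_pos_eq by lra; lra) (B / v i + 1)) as [N hN].
  specialize (hN N (le_n N)). rewrite Rabs_pos_eq in hN by (apply pow_le; lra).
  destruct (hiter N) as (j & hj & hle). specialize (hB j hj).
  assert (hBv : B / v i * v i = B) by (field; lra).
  nra.
Qed.

Section Exhibits.
Context {r p q : nat} {x : nat -> R}.
Hypotheses (hp : (0 < p)%nat) (hr : (r + 2 * p <= q)%nat) (hx : exhibits r p q x).

Lemma exhibits_lt a b : (1 <= a)%nat -> (a < b <= q)%nat -> x a < x b.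
Proof. apply incr_lt, hx. Qed.

Lemma exhibits_le a b : (1 <= a)%nat -> (a <= b <= q)%nat -> x a <= x b.
Proof. apply incr_le, hx. Qed.

Lemma exhibits_H2 j : (1 <= j <= q)%nat -> H2 (x j) = x (Pi r p q j).
Proof. apply hx. Qed.

Lemma exhibits_H2_bounds j : (1 <= j <= q)%nat -> x 1%nat <= H2 (x j) <= x q.
Proof.
  intros hj. rewrite exhibits_H2 by exact hj.
  pose proof (Pi_range r p q j hp hr hj).
  split; apply exhibits_le; lia.
Qed.
End Exhibits.

Section Patterns.
Context {p q : nat}.
Hypotheses (hp : (0 < p)%nat) (hpq : (2 * p < q)%nat).

Section P0.
Context {x : nat -> R}.
Hypothesis hx : is_P 0 p q x.

Let hxe : exhibits 0 p q x := proj1 hx.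
Let hr : (0 + 2 * p <= q)%nat := Nat.lt_le_incl _ _ hpq.

Lemma P0_I1 k : (1 <= k <= 2 * p)%nat -> 1/3 <= x k <= 2/3.
Proof.
  intros hk. destruct (proj2 hx) as [hmax hmin].
  assert (h1 : in_I1 (x 1%nat)) by (apply hmax; split; [lia | solve_Pi]).
  assert (h2p : in_I1 (x (2 * p)%nat)) by (apply (hmin (2 * p)%nat); split; [lia | solve_Pi]).
  unfold in_I1 in *.
  pose proof (exhibits_le hxe 1 k ltac:(lia) ltac:(lia)).
  pose proof (exhibits_le hxe k (2 * p) ltac:(lia) ltac:(lia)).
  lra.
Qed.

Lemma P0_top k : (1 <= k <= p)%nat -> x (q + 1 - k)%nat = 2 - 3 * x k.
Proof.
  intros hk. rewrite <- H2_mid by (apply P0_I1; lia).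
  rewrite (exhibits_H2 hxe) by lia. f_equal. solve_Pi.
Qed.

Lemma P0_fold k : (p + 1 <= k <= 2 * p)%nat -> x (2 * p + 1 - k)%nat = 2 - 3 * x k.
Proof.
  intros hk. rewrite <- H2_mid by (apply P0_I1; lia).
  rewrite (exhibits_H2 hxe) by lia. f_equal. solve_Pi.
Qed.

(* Otherwise H_2 would decrease from x_(2p) to x_(2p+1) and send x_(2p+1) below
   x_1 = H_2 (x_(2p)), the least point of the cycle. *)
Lemma P0_two_thirds_lt : 2/3 < x (2 * p + 1)%nat.
Proof.
  apply Rnot_le_lt; intros hle.
  pose proof (P0_I1 1 ltac:(lia)).
  pose proof (exhibits_le hxe 1 (2 * p + 1) ltac:(lia) ltac:(lia)).
  pose proof (exhibits_lt hxe (2 * p) (2 * p + 1) ltac:(lia) ltac:(lia)).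
  pose proof (P0_fold (2 * p) ltac:(lia)) as hfold.
  replace (2 * p + 1 - 2 * p)%nat with 1%nat in hfold by lia.
  destruct (exhibits_H2_bounds hp hr hxe (2 * p + 1) ltac:(lia)) as [hmin _].
  rewrite H2_mid in hmin by lra. lra.
Qed.

Lemma P0_shift k : (2 * p + 1 <= k <= q)%nat -> x (k - p)%nat = 3 * x k - 2.
Proof.
  intros hk. pose proof P0_two_thirds_lt.
  pose proof (exhibits_le hxe (2 * p + 1) k ltac:(lia) ltac:(lia)).
  rewrite <- H2_high by lra.
  rewrite (exhibits_H2 hxe) by lia. f_equal. solve_Pi.
Qed.
End P0.

Section P1.
Context {y : nat -> R}.
Hypothesis hy : is_P 1 p q y.

Let hye : exhibits 1 p q y := proj1 hy.
Let hr : (1 + 2 * p <= q)%nat := hpq.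

Let hmax : in_I1 (y 2%nat).
Proof. apply (proj1 (proj2 hy)); split; [lia | solve_Pi]. Qed.

Lemma P1_image_min : H2 (y (2 * p + 1)%nat) = y 1%nat.
Proof. rewrite (exhibits_H2 hye) by lia. f_equal. solve_Pi. Qed.

Lemma P1_min_I1 : q = (2 * p + 1)%nat -> in_I1 (y (2 * p + 1)%nat).
Proof.
  intros hq. pose proof (proj2 (proj2 hy) (2 * p + 1)%nat) as hmin.
  replace (1 =? q - 2 * p)%nat with true in hmin by (symmetry; apply Nat.eqb_eq; lia).
  apply hmin; split; [lia | solve_Pi].
Qed.

Lemma P1_min_I2 : (2 * p + 1 < q)%nat -> in_I2 (y (2 * p + 1)%nat).
Proof.
  intros hq. pose proof (proj2 (proj2 hy) (2 * p + 1)%nat) as hmin.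
  replace (1 =? q - 2 * p)%nat with false in hmin by (symmetry; apply Nat.eqb_neq; lia).
  apply hmin; split; [lia | solve_Pi].
Qed.

Lemma P1_first_lt_third : y 1%nat < 1/3.
Proof.
  apply Rnot_le_lt; intros hge. unfold in_I1 in hmax.
  pose proof (exhibits_lt hye 1 2 ltac:(lia) ltac:(lia)).
  destruct (exhibits_H2_bounds hp hr hye 1 ltac:(lia)) as [_ hle].
  assert (h2 : H2 (y 2%nat) = y q) by (rewrite (exhibits_H2 hye) by lia; f_equal; solve_Pi).
  rewrite H2_mid in hle by lra. rewrite H2_mid in h2 by lra. lra.
Qed.

Lemma P1_I1 k : (2 <= k <= 2 * p)%nat -> 1/3 <= y k <= 2/3.
Proof.
  intros hk.
  assert (h2p : y (2 * p)%nat <= 2/3).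
  { apply Rnot_lt_le; intros hgt.
    pose proof (exhibits_lt hye (2 * p) (2 * p + 1) ltac:(lia) ltac:(lia)).
    destruct (exhibits_H2_bounds hp hr hye (2 * p) ltac:(lia)) as [hge _].
    pose proof P1_image_min as himg.
    rewrite H2_high in hge by lra. rewrite H2_high in himg by lra. lra. }
  unfold in_I1 in hmax.
  pose proof (exhibits_le hye 2 k ltac:(lia) ltac:(lia)).
  pose proof (exhibits_le hye k (2 * p) ltac:(lia) ltac:(lia)).
  lra.
Qed.

Lemma P1_top k : (2 <= k <= p + 1)%nat -> y (q + 2 - k)%nat = 2 - 3 * y k.
Proof.
  intros hk. rewrite <- H2_mid by (apply P1_I1; lia).
  rewrite (exhibits_H2 hye) by lia. f_equal. solve_Pi.
Qed.

Lemma P1_fold k : (p + 2 <= k <= 2 * p)%nat -> y (2 * p + 2 - k)%nat = 2 - 3 * y k.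
Proof.
  intros hk. rewrite <- H2_mid by (apply P1_I1; lia).
  rewrite (exhibits_H2 hye) by lia. f_equal. solve_Pi.
Qed.

Lemma P1_shift k : (2 * p + 2 <= k <= q)%nat -> y (k - p)%nat = 3 * y k - 2.
Proof.
  intros hk. destruct (P1_min_I2 ltac:(lia)) as [hmin _].
  pose proof (exhibits_le hye (2 * p + 1) k ltac:(lia) ltac:(lia)).
  rewrite <- H2_high by lra.
  rewrite (exhibits_H2 hye) by lia. f_equal. solve_Pi.
Qed.
End P1.

Section Comparison.
Context {x y : nat -> R}.
Hypotheses (hx : is_P 0 p q x) (hy : is_P 1 p q y).

Let hxe : exhibits 0 p q x := proj1 hx.
Let hye : exhibits 1 p q y := proj1 hy.

Lemma P1_lt_P0_first : y 1%nat < x 1%nat.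
Proof. pose proof (P1_first_lt_third hy). pose proof (P0_I1 hx 1 ltac:(lia)). lra. Qed.

Lemma P1_le_P0_min : y (2 * p + 1)%nat <= x (2 * p + 1)%nat.
Proof.
  pose proof (P0_two_thirds_lt hx).
  destruct (Nat.eq_dec q (2 * p + 1)) as [hq | hq].
  - destruct (P1_min_I1 hy hq). lra.
  - destruct (P1_min_I2 hy ltac:(lia)) as [hmin _].
    pose proof (P1_image_min hy) as himg. rewrite H2_high in himg by lra.
    pose proof (P0_shift hx (2 * p + 1) ltac:(lia)) as hshift.
    replace (2 * p + 1 - p)%nat with (p + 1)%nat in hshift by lia.
    pose proof (exhibits_lt hxe 1 (p + 1) ltac:(lia) ltac:(lia)).
    pose proof P1_lt_P0_first. lra.
Qed.

Lemma P0_le_P1_min : x (2 * p)%nat <= y (2 * p + 1)%nat.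
Proof.
  pose proof (P0_I1 hx (2 * p) ltac:(lia)).
  destruct (Nat.eq_dec q (2 * p + 1)) as [hq | hq].
  - pose proof (P1_min_I1 hy hq) as hmin.
    pose proof (P1_image_min hy) as himg. rewrite H2_mid in himg by exact hmin.
    pose proof (P0_fold hx (2 * p) ltac:(lia)) as hfold.
    replace (2 * p + 1 - 2 * p)%nat with 1%nat in hfold by lia.
    pose proof P1_lt_P0_first. lra.
  - destruct (P1_min_I2 hy ltac:(lia)). lra.
Qed.

(* All gaps are nonpositive exactly when y_1 <= x_1 <= y_2 <= ... <= y_q <= x_q. *)
Definition gap (i : nat + nat) : R :=
  match i with inl k => y k - x k | inr k => x k - y (S k) end.

Definition gap_index (i : nat + nat) : Prop :=
  match i with inl k => (1 <= k <= q)%nat | inr k => (1 <= k < q)%nat end.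

Lemma gap_expanding_inl k : (1 <= k <= q)%nat -> 0 < y k - x k ->
  exists j, gap_index j /\ 3 * (y k - x k) <= gap j.
Proof.
  intros hk hpos.
  destruct (Nat.eq_dec k 1) as [-> | hk1]; [pose proof P1_lt_P0_first; lra|].
  destruct (Nat.eq_dec k (2 * p + 1)) as [-> | hk2]; [pose proof P1_le_P0_min; lra|].
  destruct (le_lt_dec k p).
  { exists (inr (q + 1 - k)%nat); split; [cbn [gap_index]; lia|]; cbn [gap].
    replace (S (q + 1 - k)) with (q + 2 - k)%nat by lia.
    rewrite (P0_top hx), (P1_top hy) by lia. lra. }
  destruct (Nat.eq_dec k (p + 1)) as [-> | hk3].
  { exists (inr p); split; [cbn [gap_index]; lia|]; cbn [gap].
    pose proof (P0_fold hx (p + 1) ltac:(lia)) as hfold.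
    replace (2 * p + 1 - (p + 1))%nat with p in hfold by lia.
    pose proof (P1_top hy (p + 1) ltac:(lia)) as htop.
    pose proof (exhibits_le hye (S p) (q + 2 - (p + 1)) ltac:(lia) ltac:(lia)).
    lra. }
  destruct (le_lt_dec k (2 * p)).
  { exists (inr (2 * p + 1 - k)%nat); split; [cbn [gap_index]; lia|]; cbn [gap].
    replace (S (2 * p + 1 - k)) with (2 * p + 2 - k)%nat by lia.
    rewrite (P0_fold hx), (P1_fold hy) by lia. lra. }
  exists (inl (k - p)%nat); split; [cbn [gap_index]; lia|]; cbn [gap].
  rewrite (P0_shift hx), (P1_shift hy) by lia. lra.
Qed.

Lemma gap_expanding_inr k : (1 <= k < q)%nat -> 0 < x k - y (S k) ->
  exists j, gap_index j /\ 3 * (x k - y (S k)) <= gap j.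
Proof.
  intros hk hpos.
  destruct (Nat.eq_dec k (2 * p)) as [-> | hk1].
  { replace (S (2 * p)) with (2 * p + 1)%nat in hpos by lia.
    pose proof P0_le_P1_min; lra. }
  destruct (le_lt_dec k p).
  { exists (inl (q + 1 - k)%nat); split; [cbn [gap_index]; lia|]; cbn [gap].
    replace (q + 1 - k)%nat with (q + 2 - S k)%nat at 1 by lia.
    rewrite (P0_top hx), (P1_top hy) by lia. lra. }
  destruct (le_lt_dec k (2 * p)).
  { exists (inl (2 * p + 1 - k)%nat); split; [cbn [gap_index]; lia|]; cbn [gap].
    replace (2 * p + 1 - k)%nat with (2 * p + 2 - S k)%nat at 1 by lia.
    rewrite (P0_fold hx), (P1_fold hy) by lia. lra. }
  exists (inr (k - p)%nat); split; [cbn [gap_index]; lia|]; cbn [gap].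
  replace (S (k - p)) with (S k - p)%nat by lia.
  rewrite (P0_shift hx), (P1_shift hy) by lia. lra.
Qed.

Lemma P1_le_P0 k : (1 <= k <= q)%nat -> y k <= x k.
Proof.
  intros hk.
  enough (gap (inl k) <= 0) by (cbn [gap] in *; lra).
  apply (expanding_nonpos gap_index gap 3 1); [lra | | | exact hk].
  - destruct hxe as [hx01 _], hye as [hy01 _].
    intros [j | j] hj; cbn [gap gap_index] in *.
    + pose proof (hx01 j hj). pose proof (hy01 j hj). lra.
    + pose proof (hx01 j ltac:(lia)). pose proof (hy01 (S j) ltac:(lia)). lra.
  - intros [j | j]; [apply gap_expanding_inl | apply gap_expanding_inr].
Qed.

Lemma P1_lt_P0_last : Nat.gcd p q = 1%nat -> y q < x q.
Proof.
  intros hcop.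
  destruct (Rle_lt_or_eq_dec _ _ (P1_le_P0 q ltac:(lia))) as [| heq]; [assumption | exfalso].
  assert (hamong : forall k, (1 <= k <= q)%nat -> exists m, (1 <= m <= q)%nat /\ x k = y m).
  { intros k hk.
    refine (proj2 (reaches_invariant (Pi 0 p q)
      (fun c => (1 <= c <= q)%nat /\ exists m, (1 <= m <= q)%nat /\ x c = y m)
      q k _ (Pi0_cyclic p q hp hpq k hcop hk) _)).
    - intros c (hc & m & hm & hcm).
      split; [apply Pi_range; lia|].
      exists (Pi 1 p q m). split; [apply Pi_range; lia|].
      rewrite <- (exhibits_H2 hxe), <- (exhibits_H2 hye), hcm by lia. reflexivity.
    - split; [lia|]. exists q. split; [lia | symmetry; exact heq]. }
  pose proof (incr_le_of_among x y q (proj1 (proj2 hxe)) (proj1 (proj2 hye)) hamong 1 ltac:(lia)).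
  pose proof P1_lt_P0_first. lra.
Qed.
End Comparison.
End Patterns.

Theorem mainTheorem13 (p q : nat) (x y : nat -> R) :
  (0 < p)%nat -> Nat.gcd p q = 1%nat -> (2 * p < q)%nat ->
  is_P 0 p q x -> is_P 1 p q y ->
  (forall j0 j1, is_max_index 0 p q j0 -> is_max_index 1 p q j1 ->
     H2 (x j0) > H2 (y j1)) /\
  (forall j0 j1, is_min_index 0 p q j0 -> is_min_index 1 p q j1 ->
     H2 (x j0) > H2 (y j1)).
Proof.
  intros hp hcop hpq hx hy.
  split; intros j0 j1 [hj0 e0] [hj1 e1];
    rewrite (exhibits_H2 (proj1 hx) j0 hj0), (exhibits_H2 (proj1 hy) j1 hj1), e0, e1.
  - exact (P1_lt_P0_last hp hpq hx hy hcop).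
  - exact (P1_lt_P0_first hp hpq hx hy).
Qed.
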